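(* Let $D$ be a digraph with $n$ vertices that contains a directed cycle, and let $g$ be its girth. Then $\chi(D)\leq \left\lfloor\frac{n-1}{g-1}\right\rfloor+1$.
   Context: All digraphs are finite, loopless and strict (at most one edge from $u$ to $v$ for distinct $u,v$). The girth is the length of a shortest directed cycle. A subset $S\subseteq V(D)$ is acyclic if $D[S]$ contains no directed cycle; a proper $k$-coloring of $D$ is a partition of $V(D)$ into at most $k$ acyclic subsets, and $\chi(D)$ is the minimum $k$ for which $D$ has a proper $k$-coloring. *)

From mathcomp Require Import all_boot.
Set Implicit Arguments. Unset Strict Implicit. Unset Printing Implicit Defensive.

(* A digraph on the finite vertex type T is given by an edge relation e : rel T
   (strictness is automatic); it is loopless when ~~ e x x for all x. *)
Definition loopless (T : finType) (e : rel T) : Prop := forall x : T, ~~ e x x.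

(* A directed cycle is a nonempty duplicate-free sequence [:: v0; ...; v_{k-1}]
   with edges v0->v1, ..., v_{k-2}->v_{k-1}, v_{k-1}->v0; its length is k. *)
Definition dicycle (T : finType) (e : rel T) (c : seq T) : Prop :=
  [/\ c != [::], uniq c & cycle e c].

Definition is_girth (T : finType) (e : rel T) (g : nat) : Prop :=
  (exists c, dicycle e c /\ size c = g) /\
  (forall c, dicycle e c -> g <= size c).

Definition acyclic_set (T : finType) (e : rel T) (S : {set T}) : Prop :=
  forall c : seq T, dicycle e c -> ~ {subset c <= S}.

(* D has a proper k-coloring: a partition of V(D) into at most k acyclic sets,
   encoded as a map to 'I_k whose colour classes are acyclic (empty classes allowed). *)
Definition dicolorable (T : finType) (e : rel T) (k : nat) : Prop :=
  exists f : T -> 'I_k, forall i : 'I_k, acyclic_set e [set x | f x == i].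

From mathcomp Require Import all_boot.
From mathcomp Require Import zify.

Set Implicit Arguments.
Unset Strict Implicit.
Unset Printing Implicit Defensive.

(* Number the vertices 0, ..., n-1 and cut this order into consecutive blocks of
   g-1 vertices; there are floor((n-1)/(g-1)) + 1 blocks.  A block has fewer than
   g vertices, so it cannot carry a directed cycle, all of which have length at
   least g: the blocks are acyclic colour classes. *)

Lemma dicycle_size_gt1 (T : finType) (e : rel T) (c : seq T) :
  loopless e -> dicycle e c -> 1 < size c.
Proof.
move=> e_loopless [c_n0 _ c_cycle].
case: c c_n0 c_cycle => [|x [|y c]] //= _.
by rewrite andbT (negbTE (e_loopless x)).
Qed.

Lemma acyclic_set_card_lt (T : finType) (e : rel T) (g : nat) (S : {set T}) :
  (forall c, dicycle e c -> g <= size c) -> #|S| < g -> acyclic_set e S.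
Proof.
move=> girth_le S_small c c_cycle c_sub_S.
have c_uniq : uniq c by case: c_cycle.
have c_le_S : size c <= #|S|.
  by rewrite -(card_uniqP c_uniq); apply/subset_leq_card/subsetP.
by have := girth_le c c_cycle; lia.
Qed.

Lemma enum_rank_div_lt (T : finType) (m : nat) (x : T) :
  enum_rank x %/ m < (#|T| - 1) %/ m + 1.
Proof.
rewrite addn1 ltnS; apply: leq_div2r.
have rank_lt : enum_rank x < #|T| := ltn_ord _.
lia.
Qed.

Definition rank_block (T : finType) (m : nat) (x : T) : 'I_((#|T| - 1) %/ m + 1) :=
  Ordinal (enum_rank_div_lt m x).

Lemma card_rank_block (T : finType) (m : nat) (i : 'I_((#|T| - 1) %/ m + 1)) :
  0 < m -> #|[set x | rank_block m x == i]| <= m.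
Proof.
move=> m_gt0; set A := [set x | _].
have ranks_uniq : uniq [seq enum_rank x : nat | x <- enum A].
  by rewrite map_inj_uniq ?enum_uniq // => x y /val_inj /enum_rank_inj.
have ranks_in_block : {subset [seq enum_rank x : nat | x <- enum A]
                                <= iota (i * m) m}.
  move=> r /mapP[x]; rewrite mem_enum inE => /eqP x_in_i ->.
  by rewrite -x_in_i mem_iota /= leq_divM -mulSnr ltn_ceil.
by rewrite cardE -(size_map (fun x => enum_rank x : nat)) -(size_iota (i * m) m)
   uniq_leq_size.
Qed.

Theorem mainTheorem7 (T : finType) (e : rel T) (g : nat) :
  loopless e ->
  (exists c : seq T, dicycle e c) ->
  is_girth e g ->
  dicolorable e ((#|T| - 1) %/ (g - 1) + 1).
Proof.
move=> e_loopless _ [[c [c_cycle <-]] girth_le].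
have g_gt1 := dicycle_size_gt1 e_loopless c_cycle.
exists (rank_block (size c - 1)) => i.
apply: (acyclic_set_card_lt girth_le).
by have := @card_rank_block T (size c - 1) i; lia.
Qed.
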